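(* Let $\delta,\zeta\ge 0$, let $n$ be a perfect square, and let $s,\bar s$ be strings of length $n$ with $|\mathrm{lcs}(s,\bar s)|\ge n^{1-\delta}$, split into blocks $b_1,\dots,b_{\sqrt n}$ and $\bar b_1,\dots,\bar b_{\sqrt n}$ as in the context. Let $\widetilde U=\{(b_{i_k},\bar b_{j_k}):1\le k\le l\}$ be a set of block pairs with $i_1<\dots<i_l$, $j_1<\dots<j_l$, $l\ge n^{1/2-2\delta}/8$ and $|\mathrm{lcs}(b_{i_k},\bar b_{j_k})|\ge n^{1/2-\delta}/2$ for every $k$, and let $\widetilde U_1\subseteq\widetilde U$ be the set of pairs in $\widetilde U$ that approximately consist of crebris symbols. If $|\widetilde U_1|\ge|\widetilde U|/2$, then the expected length of the solution returned by Algorithm A3 on $s,\bar s$ is $\Omega(n^{1/2+\zeta})$.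
   Context: $\mathrm{lcs}(x,y)$ denotes a longest common subsequence of $x,y$; $\mathsf{fr}_c(x)$ is the number of occurrences of symbol $c$ in $x$. The strings $s,\bar s$ are split into $\sqrt n$ consecutive blocks of length $\sqrt n$; $b_i,\bar b_i$ are the $i$-th blocks. For a block pair $(b_i,\bar b_j)$, a symbol $c$ is crebris if $\min\{\mathsf{fr}_c(b_i),\mathsf{fr}_c(\bar b_j)\}\ge n^{4\delta+\zeta}$. The pair approximately consists of crebris symbols if $\sum_{c\in C}\mathsf{fr}_c(b_i)\ge n^{1/2-2\delta}/4$, where $C$ is the set of crebris symbols of the pair. Algorithm A3 (randomized): for every $i,j\in[\sqrt n]$ pick a uniformly random position of $b_i$, let $c_{i,j}$ be the symbol there, and set $T[i][j]=\min\{\mathsf{fr}_{c_{i,j}}(b_i),\mathsf{fr}_{c_{i,j}}(\bar b_j)\}$. Compute $D[i][j]=0$ if $i=0$ or $j=0$, and $D[i][j]=\max\{D[i][j-1],D[i-1][j],T[i][j]+D[i-1][j-1]\}$ otherwise. The returned solution is the longest common subsequence of $s,\bar s$ subject to: characters of one block of $s$ are matched only to characters of a single block of $\bar s$ and vice versa, and if $b_i$ is matched to $\bar b_j$ all matched symbols are $c_{i,j}$; its length is $D[\sqrt n][\sqrt n]$. *)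

From HB Require Import structures.
From mathcomp Require Import all_boot all_order all_algebra.
From mathcomp Require Import reals exp.
Set Implicit Arguments. Unset Strict Implicit. Unset Printing Implicit Defensive.
Import Order.TTheory GRing.Theory Num.Theory.

Section Defs.
Variable T : finType.

Definition fr (c : T) (x : seq T) : nat := count_mem c x.

(* |lcs(x,y)| : maximal length of a common subsequence (subsequences of x
   are exactly the masks of x) *)
Definition lcs_len (x y : seq T) : nat :=
  \max_(b : (size x).-tuple bool | subseq (mask b x) y)
     size (mask b x).

(* i-th block (0-indexed) of length m of a string *)
Definition block (m : nat) (s : seq T) (i : nat) : seq T :=
  take m (drop (i * m) s).

Definition crebris {R : realType} (n : nat) (delta zeta : R)
    (bi bj : seq T) (c : T) : bool :=
  (n%:R `^ (4 * delta + zeta) <= ((minn (fr c bi) (fr c bj))%:R : R))%R.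

Definition approx_crebris {R : realType} (n : nat) (delta zeta : R)
    (bi bj : seq T) : bool :=
  (n%:R `^ (1 / 2 - 2 * delta) / 4 <=
     ((\sum_(c : T | crebris n delta zeta bi bj c) fr c bi)%N)%:R :> R)%R.

(* T[i][j] of Algorithm A3, 0-indexed blocks, given the random positions P *)
Definition A3_T (m : nat) (s sb : seq T) (P : {ffun 'I_m * 'I_m -> 'I_m})
    (i j : nat) : nat :=
  match (insub i : option 'I_m), (insub j : option 'I_m) with
  | Some a, Some b =>
      let bi := block m s i in
      let bj := block m sb j in
      match onth bi (P (a, b)) with
      | Some c => minn (fr c bi) (fr c bj)
      | None => 0
      end
  | _, _ => 0
  end.

(* D[i][j] : D[i][j] = 0 if i = 0 or j = 0, otherwise
   max {D[i][j-1], D[i-1][j], T[i][j] + D[i-1][j-1]} (T 1-indexed in paper,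
   here Tt (i-1) (j-1)). *)
Fixpoint A3_D (Tt : nat -> nat -> nat) (i j : nat) {struct i} : nat :=
  match i with
  | 0 => 0
  | i'.+1 =>
      (fix Dj (j : nat) : nat :=
         match j with
         | 0 => 0
         | j'.+1 => maxn (Dj j') (maxn (A3_D Tt i' j'.+1) (Tt i' j' + A3_D Tt i' j'))
         end) j
  end.

Definition A3_len (m : nat) (s sb : seq T) (P : {ffun 'I_m * 'I_m -> 'I_m}) : nat :=
  A3_D (A3_T s sb P) m m.

(* expected length: the positions are independent and uniform, i.e. P is
   uniform over all functions 'I_m * 'I_m -> 'I_m *)
Definition A3_expected {R : realType} (m : nat) (s sb : seq T) : R :=
  ((\sum_(P : {ffun 'I_m * 'I_m -> 'I_m}) (A3_len s sb P)%:R)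
     / (#|{ffun 'I_m * 'I_m -> 'I_m}|)%:R)%R.

End Defs.

From HB Require Import structures.
From mathcomp Require Import all_boot all_order all_algebra.
From mathcomp Require Import reals exp.
From mathcomp Require Import ring lra.
Set Implicit Arguments. Unset Strict Implicit. Unset Printing Implicit Defensive.
Import Order.TTheory GRing.Theory Num.Theory.

(* Given the random position of cell (i, j), T[i][j] is the smaller frequency of
   the symbol drawn from b_i, so averaged over the position it is at least
   n^(4 delta + zeta) times the share of positions of b_i holding crebris
   symbols; on a pair of U_1 this share is at least n^(1/2 - 2 delta) / (4 sqrt n).
   The cells of U increase strictly in both coordinates, so D[sqrt n][sqrt n]
   dominates the sum of T over U, and by linearity of expectation the at least
   n^(1/2 - 2 delta) / 16 pairs of U_1 give an expected length of at least
   n^(1/2 + zeta) / 64. *)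

Section DynamicProgram.
Variable Tt : nat -> nat -> nat.

Lemma A3_D_SS i j : A3_D Tt i.+1 j.+1 =
  maxn (A3_D Tt i.+1 j) (maxn (A3_D Tt i j.+1) (Tt i j + A3_D Tt i j)).
Proof. by []. Qed.

Lemma A3_D_monotone_r i j j' : (j <= j')%N -> (A3_D Tt i j <= A3_D Tt i j')%N.
Proof.
by apply: (homo_leq leqnn leq_trans) => {}j; case: i => //= i; exact: leq_maxl.
Qed.

Lemma A3_D_monotone_l i i' j : (i <= i')%N -> (A3_D Tt i j <= A3_D Tt i' j)%N.
Proof.
apply: (homo_leq leqnn leq_trans (f := A3_D Tt ^~ j)) => {}i.
case: j => [|j]; first by case: i.
by rewrite A3_D_SS (leq_trans _ (leq_maxr _ _)) ?leq_maxl.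
Qed.

Lemma A3_D_step i j : (Tt i j + A3_D Tt i j <= A3_D Tt i.+1 j.+1)%N.
Proof. by rewrite A3_D_SS (leq_trans _ (leq_maxr _ _)) ?leq_maxr. Qed.

Lemma A3_D_ge_chain (X : eqType) (f g : X -> nat) (U : seq X) i j :
  pairwise (fun a b => (f a < f b)%N && (g a < g b)%N) U ->
  (forall k, k \in U -> (f k < i)%N && (g k < j)%N) ->
  (\sum_(k <- U) Tt (f k) (g k) <= A3_D Tt i j)%N.
Proof.
elim/last_ind: U i j => [|U x IH] i j; first by rewrite big_nil.
rewrite pairwise_rcons big_rcons /= => /andP[/allP before_x chainU] inU.
have /andP[fx_i gx_j] : (f x < i)%N && (g x < j)%N.
  by rewrite inU // mem_rcons mem_head.
apply: leq_trans (A3_D_monotone_l j fx_i).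
apply: leq_trans (A3_D_monotone_r _ gx_j).
rewrite addnC (leq_trans _ (A3_D_step _ _)) // leq_add2l.
by apply: IH chainU _ => k /[dup] /before_x /andP[-> ->].
Qed.

End DynamicProgram.

Local Open Scope ring_scope.

Lemma big_onth (R : nmodType) (X : Type) (G : option X -> R) (s : seq X) :
  \sum_(i < size s) G (onth s i) = \sum_(x <- s) G (Some x).
Proof.
elim: s => [|x s IH]; first by rewrite big_ord0 big_nil.
by rewrite big_ord_recl big_cons IH.
Qed.

Lemma big_seq_count_mem (R : nmodType) (T : finType) (F : T -> R) (s : seq T) :
  \sum_(x <- s) F x = \sum_(c : T) F c *+ count_mem c s.
Proof.
elim: s => [|x s IH]; first by rewrite big_nil big1.
transitivity (\sum_(c : T) (F c *+ (x == c) + F c *+ count_mem c s)).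
  rewrite big_cons big_split /= IH; congr (_ + _).
  by rewrite (bigD1 x) //= eqxx big1 ?addr0 // => c /negPf; rewrite eq_sym => ->.
by apply: eq_bigr => c _; rewrite -mulrnDr.
Qed.

Lemma sum_ffun_app (R : comPzSemiRingType) (I J : finType) (i : I) (F : J -> R) :
  \sum_(P : {ffun I -> J}) F (P i) = (\sum_j F j) * #|J|%:R ^+ #|I|.-1.
Proof.
have F_prod (P : {ffun I -> J}) :
    F (P i) = \prod_k (if k == i then F (P k) else 1).
  by rewrite (bigD1 i) //= eqxx big1 ?mulr1 // => k /negPf ->.
rewrite (eq_bigr _ (fun P _ => F_prod P)).
rewrite -(bigA_distr_bigA (fun k j => if k == i then F j else 1)) /=.
rewrite (bigD1 i) //= eqxx; congr (_ * _).
rewrite (eq_bigr (fun _ => #|J|%:R)) ?prodr_const ?cardC1 // => k /negPf ->.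
by rewrite sumr_const.
Qed.

Lemma count_mul_le_sum (R : numDomainType) (X : Type) (p : pred X) (F : X -> R)
    (c : R) (U : seq X) :
  (forall k, 0 <= F k) -> (forall k, p k -> c <= F k) ->
  (count p U)%:R * c <= \sum_(k <- U) F k.
Proof.
move=> F_ge0 p_le; rewrite -sum1_count natr_sum mulr_suml big_mkcond /=.
by apply: ler_sum => k _; case: ifP => [/p_le|_]; rewrite ?mul1r ?mul0r.
Qed.

Section AlgorithmA3.
Variable T : finType.

Definition A3_entry (bi bj : seq T) (x : nat) : nat :=
  if onth bi x is Some c then minn (fr c bi) (fr c bj) else 0.

Lemma approx_crebris_sum_A3_entry (R : realType) n (delta zeta : R) m
    (bi bj : seq T) :
  size bi = m -> approx_crebris n delta zeta bi bj ->
  n%:R `^ (4 * delta + zeta) * (n%:R `^ (1 / 2 - 2 * delta) / 4) <=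
    \sum_(x < m) (A3_entry bi bj x)%:R.
Proof.
move=> <- /(ler_wpM2l (powR_ge0 n%:R (4 * delta + zeta))) /le_trans; apply.
rewrite (@big_onth R T (fun o => (if o is Some c then minn (fr c bi) (fr c bj)
                                    else 0)%:R)) big_seq_count_mem.
rewrite [leRHS](bigID (crebris n delta zeta bi bj)) /=.
apply: ler_wpDr; first by apply: sumr_ge0 => c _; rewrite mulrn_wge0.
rewrite natr_sum mulr_sumr; apply: ler_sum => c crebris_c.
by rewrite mulr_natr ler_wMn2r.
Qed.

Lemma size_block m (s : seq T) i : size s = (m * m)%N -> (i < m)%N ->
  size (block m s i) = m.
Proof.
move=> size_s lt_im; rewrite /block size_takel // size_drop size_s -mulnBl.
by rewrite leq_pmull // subn_gt0.
Qed.

Variables (m : nat) (s sb : seq T).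

Definition increasing_cells (U : seq ('I_m * 'I_m)) : bool :=
  sorted (fun a b : 'I_m * 'I_m => (a.1 < b.1)%N && (a.2 < b.2)%N) U.

Lemma A3_TE P (a b : 'I_m) :
  A3_T s sb P a b = A3_entry (block m s a) (block m sb b) (P (a, b)).
Proof. by rewrite /A3_T !valK. Qed.

Lemma A3_len_ge_chain (P : {ffun 'I_m * 'I_m -> 'I_m}) U : increasing_cells U ->
  (\sum_(k <- U) A3_entry (block m s k.1) (block m sb k.2) (P k)
     <= A3_len s sb P)%N.
Proof.
move=> sorted_U.
rewrite (eq_bigr (fun k : 'I_m * 'I_m => A3_T s sb P k.1 k.2)) => [|[a b] _];
  last by rewrite A3_TE.
apply: (@A3_D_ge_chain _ _ (fun k => val k.1) (fun k => val k.2)).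
  rewrite -sorted_pairwise // => b a c /andP[ab1 ab2] /andP[bc1 bc2].
  by rewrite (ltn_trans ab1 bc1) (ltn_trans ab2 bc2).
by move=> k _; rewrite !ltn_ord.
Qed.

Lemma A3_expected_ge_chain (R : realType) U : (0 < m)%N -> increasing_cells U ->
  (\sum_(k <- U) \sum_(x < m) (A3_entry (block m s k.1) (block m sb k.2) x)%:R)
    / m%:R <= A3_expected (R := R) m s sb.
Proof.
move=> m_gt0 sorted_U; set X := \sum_(k <- U) _.
set M : R := m%:R ^+ (m * m).-1.
have M_gt0 : 0 < M by rewrite exprn_gt0 ?ltr0n.
have chain_sum :
    X * M <= \sum_(P : {ffun 'I_m * 'I_m -> 'I_m}) (A3_len s sb P)%:R.
  rewrite /X mulr_suml (eq_bigr (fun k : 'I_m * 'I_m =>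
      \sum_(P : {ffun 'I_m * 'I_m -> 'I_m})
        (A3_entry (block m s k.1) (block m sb k.2) (P k))%:R)) => [|k _].
    rewrite exchange_big /=; apply: ler_sum => P _.
    by rewrite -natr_sum ler_nat A3_len_ge_chain.
  rewrite (@sum_ffun_app R _ 'I_m k (fun x => (A3_entry _ _ x)%:R)).
  by rewrite card_prod !card_ord.
have mm_gt0 : (0 < m * m)%N by rewrite muln_gt0 m_gt0.
rewrite /A3_expected card_ffun card_prod !card_ord natrX -(prednK mm_gt0).
rewrite exprS -/M ler_pdivlMr ?mulr_gt0 ?ltr0n //.
by rewrite mulrA divfK ?pnatr_eq0 -?lt0n.
Qed.

End AlgorithmA3.

Lemma powR_exponents_balance (R : realType) (x delta zeta : R) : 0 < x ->
  (x `^ (1 / 2 - 2 * delta)) ^+ 2 * x `^ (4 * delta + zeta) =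
    x `^ (1 / 2 + zeta) * x `^ (1 / 2).
Proof.
move=> x_gt0; have powRD' r t : x `^ (r + t) = x `^ r * x `^ t.
  by rewrite powRD // (gt_eqF x_gt0) implybT.
by rewrite expr2 -!powRD'; congr (_ `^ _); lra.
Qed.

Theorem mainTheorem3 (R : realType) (delta zeta : R) :
  0 <= delta -> 0 <= zeta ->
  exists c : R, 0 < c /\ exists N : nat,
  forall (n m : nat), n = (m * m)%N -> (N <= n)%N ->
  forall (Sigma : finType) (s sb : seq Sigma),
    size s = n -> size sb = n ->
    n%:R `^ (1 - delta) <= (lcs_len s sb)%:R ->
  forall U : seq ('I_m * 'I_m),
    sorted (fun a b : 'I_m * 'I_m => (a.1 < b.1)%N && (a.2 < b.2)%N) U ->
    n%:R `^ (1 / 2 - 2 * delta) / 8 <= (size U)%:R ->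
    (forall k : 'I_m * 'I_m, k \in U ->
       n%:R `^ (1 / 2 - delta) / 2 <=
         (lcs_len (block m s k.1) (block m sb k.2))%:R) ->
    (size U)%:R / 2 <=
      (size [seq k : 'I_m * 'I_m <- U | approx_crebris n delta zeta
                            (block m s k.1) (block m sb k.2)])%:R :> R ->
    c * n%:R `^ (1 / 2 + zeta) <= A3_expected (R:=R) m s sb.
Proof.
move=> _ _; exists (1 / 64); split; first by rewrite divr_gt0.
exists 1%N.
move=> n m -> n_gt0 Sigma s sb size_s _ _ U sorted_U U_large _ U1_large.
have m_gt0 : (0 < m)%N by rewrite lt0n; apply: contraTneq n_gt0 => ->.
have mm_gt0 : (0 : R) < (m * m)%N%:R by rewrite ltr0n muln_gt0 m_gt0.
rewrite size_filter in U1_large; set p := (X in count X U) in U1_large.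
set A := _ `^ (1 / 2 - 2 * delta) in U_large *.
set B : R := (m * m)%N%:R `^ (4 * delta + zeta).
have pair_gain k : p k -> B * (A / 4) <=
    \sum_(x < m) (A3_entry (block m s k.1) (block m sb k.2) x)%:R.
  exact/approx_crebris_sum_A3_entry/size_block.
have crebris_pairs : A / 16 <= (count p U)%:R by apply: le_trans U1_large; lra.
apply: le_trans (A3_expected_ge_chain s sb R m_gt0 sorted_U).
rewrite ler_pdivlMr ?ltr0n //.
have sqrt_n : (m * m)%:R `^ (1 / 2) = m%:R :> R.
  by rewrite div1r powR12_sqrt ?ler0n // natrM -expr2 sqrtr_sqr ger0_norm.
have -> : 1 / 64 * (m * m)%:R `^ (1 / 2 + zeta) * m%:R = A / 16 * (B * (A / 4)).
  by rewrite -sqrt_n -mulrA -(powR_exponents_balance delta) // /A /B; field.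
apply: le_trans (_ : (count p U)%:R * (B * (A / 4)) <= _).
  by rewrite ler_wpM2r // mulr_ge0 ?divr_ge0 ?powR_ge0.
by apply: count_mul_le_sum => [k | k /pair_gain]; first exact: sumr_ge0.
Qed.
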